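(* Let $D$ be a division semialgebra over $\mathbb{Z}_\mathrm{max}$ with finite unit index. Then the group $G=D^\times/\mathbb{Z}_\mathrm{max}^\times$ is cyclic.
   Context: A (possibly noncommutative) semiring has a commutative associative addition with identity $0$ and an associative multiplication with identity $1$, satisfying both distributive laws; a division semiring is one in which every nonzero element is invertible. $\mathbb{Z}_\mathrm{max}=\mathbb{Z}\cup\{-\infty\}$ is the semifield with addition $\max$ and multiplication ordinary addition. A division semialgebra over a semifield $K$ is a division semiring $D$ with an injective homomorphism from $K$ into the center of $D$. The unit index is $\mathrm{ui}(D/K)=|D^\times/K^\times|$. *)

From HB Require Import structures.
From mathcomp Require Import all_boot all_order all_algebra.
Set Implicit Arguments. Unset Strict Implicit. Unset Printing Implicit Defensive.
Import Order.TTheory GRing.Theory Num.Theory.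

(* The semifield Z_max = Z ∪ {-oo}: None stands for -oo, Some n for n : int. *)
Definition zmax := option int.
Definition zmax_neginf : zmax := None.
Definition zmax_one : zmax := Some 0%R.

Definition zmax_add (a b : zmax) : zmax :=
  match a, b with
  | None, _ => b
  | _, None => a
  | Some x, Some y => Some (Order.max x y)
  end.

Definition zmax_mul (a b : zmax) : zmax :=
  match a, b with
  | Some x, Some y => Some (x + y)%R
  | _, _ => None
  end.

Local Open Scope ring_scope.

Definition division_semiring (D : pzSemiRingType) : Prop :=
  forall x : D, x != 0 -> exists y : D, x * y = 1 /\ y * x = 1.

(* phi : Z_max -> D is an injective semiring homomorphism into the center of D,
   i.e. D is a division semialgebra over Z_max via phi. *)
Definition zmax_central_embedding (D : pzSemiRingType) (phi : zmax -> D) : Prop :=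
  injective phi /\
  [/\ phi zmax_neginf = 0,
      phi zmax_one = 1,
      (forall a b, phi (zmax_add a b) = phi a + phi b),
      (forall a b, phi (zmax_mul a b) = phi a * phi b)
    & (forall a (d : D), phi a * d = d * phi a)].

(* The units of D (= nonzero elements in a division semiring) are
   D^x; the units of Z_max are the Some n, with image phi (Some n).
   Finite unit index: D^x / Z_max^x has finitely many cosets, i.e. there is a
   finite list of units whose cosets cover D^x. *)
Definition finite_unit_index (D : pzSemiRingType) (phi : zmax -> D) : Prop :=
  exists s : seq D, all (fun u => u != 0) s /\
    forall u : D, u != 0 -> exists2 v, v \in s & exists n : int, u = v * phi (Some n).

(* The quotient group D^x / Z_max^x is cyclic: it is generated by the class of
   one unit g (nonnegative powers suffice, the group being finite). *)
Definition unit_quotient_cyclic (D : pzSemiRingType) (phi : zmax -> D) : Prop :=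
  exists2 g : D, g != 0 &
    forall u : D, u != 0 -> exists (k : nat) (n : int), u = g ^+ k * phi (Some n).

From mathcomp Require Import all_boot all_order all_algebra.
From mathcomp Require Import zify.
From Stdlib Require Import Classical ClassicalEpsilon.
Import Order.TTheory GRing.Theory Num.Theory.
Set Implicit Arguments. Unset Strict Implicit. Unset Printing Implicit Defensive.
Local Open Scope ring_scope.

(* Since 1 + 1 = 1 in Z_max, D is additively idempotent and x ⊑ y :<-> x + y = y
   is a partial order compatible with multiplication.  Finite unit index makes
   some power of every unit lie in Z_max, which forces every unit to be
   comparable with 1, so the order is total on units.  Let g be the least unit
   in ]1, t] with t = phi 1; each class of D^x/Z_max^x meets ]1, t] at most once,
   so g exists.  Every unit can be rescaled by Z_max into [1, g^k] for some k,
   and a unit in [1, g^k] is a power of g because nothing lies strictly between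
   1 and g. *)

Definition idem_le (D : pzSemiRingType) (x y : D) : Prop := x + y = y.
Local Notation "x ⊑ y" := (idem_le x y) (at level 70, no associativity).

Section IdempotentOrder.
Variable D : pzSemiRingType.
Implicit Types x y z u : D.

Lemma idem_le_trans y x z : x ⊑ y -> y ⊑ z -> x ⊑ z.
Proof. by rewrite /idem_le => hxy hyz; rewrite -hyz addrA hxy. Qed.

Lemma idem_le_anti x y : x ⊑ y -> y ⊑ x -> x = y.
Proof. by rewrite /idem_le => hxy hyx; rewrite -hyx addrC hxy. Qed.

Lemma idem_le_mul2l z x y : x ⊑ y -> z * x ⊑ z * y.
Proof. by rewrite /idem_le => hxy; rewrite -mulrDr hxy. Qed.

Lemma idem_le_mul2r z x y : x ⊑ y -> x * z ⊑ y * z.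
Proof. by rewrite /idem_le => hxy; rewrite -mulrDl hxy. Qed.

Hypothesis oneD_idem : 1 + 1 = 1 :> D.

Lemma idem_le_refl x : x ⊑ x.
Proof. by rewrite /idem_le -{1 2 3}(mulr1 x) -mulrDr oneD_idem. Qed.

Lemma idem_le_exp_ge1 u k : 1 ⊑ u -> u ⊑ u ^+ k.+1.
Proof.
move=> hu; elim: k => [|k IH]; first by rewrite expr1; exact: idem_le_refl.
apply: idem_le_trans IH _; have := idem_le_mul2l (u ^+ k.+1) hu.
by rewrite mulr1 -exprSr.
Qed.

Lemma idem_le_exp_le1 u k : u ⊑ 1 -> u ^+ k.+1 ⊑ u.
Proof.
move=> hu; elim: k => [|k IH]; first by rewrite expr1; exact: idem_le_refl.
apply: idem_le_trans _ IH; have := idem_le_mul2l (u ^+ k.+1) hu.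
by rewrite mulr1 -exprSr.
Qed.

End IdempotentOrder.

Lemma neq0_oner_neq0 (D : pzSemiRingType) (x : D) : x != 0 -> 1 != 0 :> D.
Proof. by apply: contraNneq => h10; rewrite -(mulr1 x) h10 mulr0. Qed.

Section DivisionSemiring.
Variable D : pzSemiRingType.
Hypothesis divD : division_semiring D.
Implicit Types x y v : D.

Lemma divs_mulI v x y : v != 0 -> v * x = v * y -> x = y.
Proof.
move=> /divD [w [_ hwv]] e.
by rewrite -(mul1r x) -(mul1r y) -hwv -!mulrA e.
Qed.

Lemma divs_mulf_neq0 x y : x != 0 -> y != 0 -> x * y != 0.
Proof.
move=> hx hy; apply: contraNneq (neq0_oner_neq0 hx) => hxy.
have [y' [hyy' _]] := divD hy; have [x' [hxx' _]] := divD hx.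
by rewrite -hxx' -{1}(mulr1 x) -hyy' mulrA hxy !mul0r.
Qed.

Lemma divs_expf_neq0 x k : x != 0 -> x ^+ k != 0.
Proof.
move=> hx; elim: k => [|k IH]; first by rewrite expr0 (neq0_oner_neq0 hx).
by rewrite exprS divs_mulf_neq0.
Qed.

End DivisionSemiring.

Lemma exists_seq_cover (T : eqType) (P : T -> Prop) (C : T -> T -> Prop) (s : seq T) :
  (forall v x y, P x -> P y -> C v x -> C v y -> x = y) ->
  exists l : seq T, forall x, P x -> (exists2 v, v \in s & C v x) -> x \in l.
Proof.
move=> Cuniq; elim: s => [|v s [l IH]]; first by exists [::] => x _ [].
have [[x0 [Px0 Cx0]] | noPC] := classic (exists x, P x /\ C v x).
  exists (x0 :: l) => x Px [v' /predU1P [-> Cx | sv' Cx']]; rewrite in_cons.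
    by rewrite (Cuniq v x x0) ?eqxx.
  by rewrite IH ?orbT //; exists v'.
exists l => x Px [v' /predU1P [-> Cx | sv' Cx']]; last by apply: IH => //; exists v'.
by case: noPC; exists x.
Qed.

Lemma exists_min_in_seq (T : eqType) (le : T -> T -> Prop) (P : T -> Prop) (l : seq T) :
  (forall x, le x x) -> (forall y x z, le x y -> le y z -> le x z) ->
  (forall x y, P x -> P y -> le x y \/ le y x) ->
  forall x0, P x0 -> x0 \in l ->
  exists2 m, P m & forall y, P y -> y \in l -> le m y.
Proof.
move=> refl trans total; elim: l => [//|a l IH] x0 Px0.
have [[x [Px lx]] | noPl] := classic (exists x, P x /\ x \in l); last first.
  move=> /predU1P [ea | lx0]; last by case: noPl; exists x0.
  subst x0; exists a => // y Py /predU1P [-> | ly]; first exact: refl.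
  by case: noPl; exists y.
have [m Pm minm] := IH x Px lx; move=> _.
have [Pa | nPa] := classic (P a); last first.
  by exists m => // y Py /predU1P [ya | /minm]; [rewrite ya in Py | apply].
have [am | ma] := total a m Pa Pm.
  exists a => // y Py /predU1P [-> | /(minm _ Py)]; [exact: refl | exact: trans].
by exists m => // y Py /predU1P [-> | /(minm _ Py)].
Qed.

Section ZmaxDivisionSemialgebra.
Variables (D : pzSemiRingType) (phi : zmax -> D).
Hypothesis phi_emb : zmax_central_embedding phi.
Local Notation t k := (phi (Some k%R)).
Implicit Types x y u : D.

Lemma phiSM a b : t a * t b = t (a + b).
Proof. by case: phi_emb => _ [_ _ _ phiM _]; rewrite -phiM. Qed.

Lemma phiS0 : t 0 = 1.
Proof. by case: phi_emb => _ []. Qed.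

Lemma phiS_neq0 a : t a != 0.
Proof. by case: phi_emb => phi_inj [phi0 _ _ _ _]; apply/eqP; rewrite -phi0 => /phi_inj. Qed.

Lemma phiS_inj a b : t a = t b -> a = b.
Proof. by case: phi_emb => phi_inj _ /phi_inj []. Qed.

Lemma phiS_le a b : t a ⊑ t b <-> a <= b.
Proof.
case: phi_emb => phi_inj [_ _ phiD _ _]; rewrite /idem_le -phiD /=.
by split => [/phi_inj [/max_idPr] | /max_idPr ->].
Qed.

Lemma oneD_idem_zmax : 1 + 1 = 1 :> D.
Proof. by rewrite -phiS0; apply/phiS_le. Qed.

Lemma phiSX a (k : nat) : t a ^+ k = t (a * k%:Z).
Proof.
elim: k => [|k IH]; first by rewrite expr0 mulr0 phiS0.
by rewrite exprS IH phiSM; congr (phi (Some _)); lia.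
Qed.

Lemma ge1_neq0 x : 1 ⊑ x -> x != 0.
Proof.
move=> h1x; apply/eqP => x0; move: h1x; rewrite x0 /idem_le addr0 => e1.
by move: (phiS_neq0 0); rewrite phiS0 e1 eqxx.
Qed.

Hypothesis divD : division_semiring D.

(* With y = 1 + x + ... + x^(m-1) one has x y = (x + ... + x^(m-1)) + x^m, so
   comparing x^m with 1 compares x y with y. *)
Lemma unit_cmp1 x m n : (0 < m)%N -> x ^+ m = t n ->
  (0 <= n -> 1 ⊑ x) /\ (n <= 0 -> x ⊑ 1).
Proof.
case: m => [//|m] _ hxm.
pose S := \sum_(i < m) x ^+ i.+1.
pose y := \sum_(i < m.+1) x ^+ i.
have y_def : y = 1 + S.
  by rewrite /y big_ord_recl expr0; congr (_ + _); apply: eq_bigr.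
have xy_def : x * y = S + t n.
  rewrite /y mulr_sumr big_ord_recr /= -exprS hxm; congr (_ + _).
  by apply: eq_bigr => i _; rewrite -exprS.
have SS : S + S = S := idem_le_refl oneD_idem_zmax S.
have y_neq0 : y != 0.
  apply: contraNneq (phiS_neq0 0) => y0.
  by rewrite phiS0 -[1]addr0 -y0 y_def addrA oneD_idem_zmax -y_def y0.
have [w [yw _]] := divD y_neq0.
have cancel_y z : z * y ⊑ x * y -> z ⊑ x.
  by move=> /(idem_le_mul2r w); rewrite -!mulrA yw !mulr1.
have cancel_y' z : x * y ⊑ z * y -> x ⊑ z.
  by move=> /(idem_le_mul2r w); rewrite -!mulrA yw !mulr1.
split=> hn.
  have htn : 1 ⊑ t n by rewrite -phiS0; apply/phiS_le.
  apply: cancel_y; rewrite mul1r /idem_le xy_def y_def.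
  by rewrite [S + _]addrC addrACA htn SS addrC.
have htn : t n ⊑ 1 by rewrite -phiS0; apply/phiS_le.
apply: cancel_y'; rewrite mul1r /idem_le xy_def y_def.
by rewrite [S + _]addrC addrACA htn SS.
Qed.

Hypothesis fin_index : finite_unit_index phi.

(* Pigeonhole on the classes of 1, x, ..., x^|s|. *)
Lemma unit_exp_zmax x : x != 0 -> exists m n, (0 < m)%N /\ x ^+ m = t n.
Proof.
have [s [_ cover]] := fin_index; move=> x_neq0.
have cls i : exists v, v \in s /\ exists n, x ^+ i = v * t n.
  have [v sv [n hn]] := cover _ (divs_expf_neq0 divD i x_neq0).
  by exists v; split=> //; exists n.
have [f fP] : exists f : nat -> D, forall i, f i \in s /\ exists n, x ^+ i = f i * t n.
  exists (fun i => proj1_sig (constructive_indefinite_description _ (cls i))) => i.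
  exact: proj2_sig (constructive_indefinite_description _ (cls i)).
have : ~~ uniq (map f (iota 0 (size s).+1)).
  apply: contraT => /negbNE /uniq_leq_size /(_ _) le_s.
  have /le_s : {subset map f (iota 0 (size s).+1) <= s}.
    by move=> _ /mapP [i _ ->]; case: (fP i).
  by rewrite size_map size_iota ltnn.
move=> /(uniqPn 0) [i [j [ltij]]]; rewrite size_map size_iota => ltj.
have lti := ltn_trans ltij ltj.
rewrite !(nth_map 0%N) ?size_iota // !nth_iota // !add0n => fij.
have [_ [a ha]] := fP i; have [_ [b hb]] := fP j.
exists (j - i)%N, (b - a); split; first by rewrite subn_gt0.
apply: (divs_mulI divD (divs_expf_neq0 divD i x_neq0)).
by rewrite -exprD subnKC ?(ltnW ltij) // hb -fij ha -mulrA phiSM addrC subrK.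
Qed.

Lemma unit_le_total x y : x != 0 -> y != 0 -> x ⊑ y \/ y ⊑ x.
Proof.
move=> x_neq0 /divD [y' [yy' y'y]].
have y'_neq0 : y' != 0.
  by apply/eqP => y'0; move: (neq0_oner_neq0 x_neq0); rewrite -yy' y'0 mulr0 eqxx.
have [m [n [m_gt0 hxm]]] := unit_exp_zmax (divs_mulf_neq0 divD x_neq0 y'_neq0).
have [ge1 le1] := unit_cmp1 m_gt0 hxm.
have xy'y : x * y' * y = x by rewrite -mulrA y'y mulr1.
have [n_ge0 | n_le0] := leP 0 n.
  by right; have := idem_le_mul2r y (ge1 n_ge0); rewrite mul1r xy'y.
by left; have := idem_le_mul2r y (le1 (ltW n_le0)); rewrite mul1r xy'y.
Qed.

Lemma unit_bounded u : u != 0 -> exists N : nat, t (- N%:Z) ⊑ u /\ u ⊑ t N%:Z.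
Proof.
move=> u_neq0; have [[|m] [n [//= _ hum]]] := unit_exp_zmax u_neq0.
have [ge1 le1] := unit_cmp1 (ltn0Sn m) hum.
exists `|n|%N; have [n_ge0 | n_le0] := leP 0 n.
  have h1u := ge1 n_ge0; split.
    by apply: idem_le_trans h1u; rewrite -phiS0; apply/phiS_le; lia.
  apply: idem_le_trans (idem_le_exp_ge1 oneD_idem_zmax m h1u) _.
  by rewrite hum; apply/phiS_le; lia.
have hu1 := le1 (ltW n_le0); split.
  apply: idem_le_trans (idem_le_exp_le1 oneD_idem_zmax m hu1).
  by rewrite hum; apply/phiS_le; lia.
by apply: idem_le_trans hu1 _; rewrite -phiS0; apply/phiS_le; lia.
Qed.

Definition in_oc_1_t x : Prop := [/\ 1 ⊑ x, x != 1 & x ⊑ t 1].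

Lemma in_oc_1_t_class_le0 x k : in_oc_1_t x -> in_oc_1_t (x * t k) -> k <= 0.
Proof.
move=> [h1x x_neq1 _] [_ _ hxkt]; rewrite leNgt; apply/negP => k_gt0.
have htk : t k ⊑ x * t k by have := idem_le_mul2r (t k) h1x; rewrite mul1r.
have k1 : k = 1 by have /phiS_le := idem_le_trans htk hxkt; lia.
move: x_neq1; rewrite k1 in hxkt htk.
have -> : x = x * t 1 * t (- 1) by rewrite -mulrA phiSM subrr phiS0 mulr1.
by rewrite (idem_le_anti hxkt htk) phiSM subrr phiS0 eqxx.
Qed.

Lemma in_oc_1_t_class_uniq x k : in_oc_1_t x -> in_oc_1_t (x * t k) -> x * t k = x.
Proof.
move=> hx hxk; have k_le0 := in_oc_1_t_class_le0 hx hxk.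
have : in_oc_1_t (x * t k * t (- k)) by rewrite -mulrA phiSM subrr phiS0 mulr1.
move=> /(in_oc_1_t_class_le0 hxk); rewrite oppr_le0 => k_ge0.
have -> : k = 0 by lia.
by rewrite phiS0 mulr1.
Qed.

Lemma exists_least_in_oc_1_t :
  exists g, in_oc_1_t g /\ forall y, in_oc_1_t y -> g ⊑ y.
Proof.
have [s [_ cover]] := fin_index.
pose C v x := exists n, x = v * t n.
have [l cover_l] : exists l : seq D,
    forall x, in_oc_1_t x -> (exists2 v, v \in s & C v x) -> x \in l.
  apply: exists_seq_cover => v x y hx hy [a xa] [b yb]; subst x y.
  have vb : v * t b = v * t a * t (b - a) by rewrite -mulrA phiSM addrC subrK.
  by rewrite vb (in_oc_1_t_class_uniq hx) // -vb.
have in_l x : in_oc_1_t x -> x \in l.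
  by move=> hx; apply: cover_l => //; have [h1x _ _] := hx; apply: cover; exact: ge1_neq0.
have t1_in : in_oc_1_t (t 1).
  split; [by rewrite -phiS0; apply/phiS_le | | exact: idem_le_refl oneD_idem_zmax _].
  by rewrite -phiS0; apply/eqP => /phiS_inj.
have total x y : in_oc_1_t x -> in_oc_1_t y -> x ⊑ y \/ y ⊑ x.
  by move=> [h1x _ _] [h1y _ _]; apply: unit_le_total; apply: ge1_neq0.
have [g hg gmin] := exists_min_in_seq (idem_le_refl oneD_idem_zmax)
  (@idem_le_trans D) total t1_in (in_l _ t1_in).
by exists g; split=> // y hy; apply: gmin hy (in_l _ hy).
Qed.

Section LeastGenerator.
Variable g : D.
Hypothesis g_least : in_oc_1_t g /\ forall y, in_oc_1_t y -> g ⊑ y.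

Lemma least_neq0 : g != 0.
Proof. by case: g_least => -[g1 _ _] _; exact: ge1_neq0. Qed.

Lemma between_1_least x : 1 ⊑ x -> x ⊑ g -> x = 1 \/ x = g.
Proof.
move=> h1x hxg; have [[_ _ hgt] gmin] := g_least.
have [-> | x_neq1] := eqVneq x 1; [by left | right].
have hx : in_oc_1_t x by split=> //; apply: idem_le_trans hxg hgt.
exact: idem_le_anti hxg (gmin x hx).
Qed.

Lemma ge1_le_least_exp k u : 1 ⊑ u -> u ⊑ g ^+ k -> exists j, u = g ^+ j.
Proof.
elim: k u => [|k IH] u h1u.
  by rewrite expr0 => hu1; exists 0%N; rewrite expr0; apply: idem_le_anti.
move=> hugk; have [ug | gu] := unit_le_total (ge1_neq0 h1u) least_neq0.
  by have [-> | ->] := between_1_least h1u ug; [exists 0%N | exists 1%N].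
have [gi [ggi gig]] := divD least_neq0.
have [j hj] : exists j, gi * u = g ^+ j.
  apply: IH; first by rewrite -gig; apply: idem_le_mul2l.
  by move: (idem_le_mul2l gi hugk); rewrite exprS mulrA gig mul1r.
by exists j.+1; rewrite exprS -hj mulrA ggi mul1r.
Qed.

Lemma least_exp_unbounded n : exists M, t n ⊑ g ^+ M.
Proof.
have [[g1 g_neq1 _] _] := g_least.
have [m [n' [m_gt0 hgm]]] := unit_exp_zmax least_neq0.
have n'_gt0 : 0 < n'.
  rewrite ltNge; apply/negP => /((unit_cmp1 m_gt0 hgm).2) g_le1.
  by move: g_neq1; rewrite (idem_le_anti g_le1 g1) eqxx.
by exists (m * `|n|)%N; rewrite exprM hgm phiSX; apply/phiS_le; nia.
Qed.

Lemma least_generates u : u != 0 -> exists (k : nat) (n : int), u = g ^+ k * t n.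
Proof.
move=> u_neq0; have [N [hNu huN]] := unit_bounded u_neq0.
pose v := u * t N%:Z.
have h1v : 1 ⊑ v by have := idem_le_mul2r (t N%:Z) hNu; rewrite phiSM addNr phiS0.
have [M hM] := least_exp_unbounded (N%:Z + N%:Z).
have [j hj] : exists j, v = g ^+ j.
  apply: (ge1_le_least_exp (k := M)) h1v _; apply: idem_le_trans hM.
  by have := idem_le_mul2r (t N%:Z) huN; rewrite phiSM.
by exists j, (- N%:Z); rewrite -hj -mulrA phiSM subrr phiS0 mulr1.
Qed.

End LeastGenerator.

End ZmaxDivisionSemialgebra.

Theorem mainTheorem17 (D : pzSemiRingType) (phi : zmax -> D) :
  division_semiring D ->
  zmax_central_embedding phi ->
  finite_unit_index phi ->
  unit_quotient_cyclic phi.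
Proof.
move=> divD phi_emb fin_index.
have [g g_least] := exists_least_in_oc_1_t phi_emb divD fin_index.
exists g; first exact: (least_neq0 phi_emb g_least).
exact: (least_generates phi_emb divD fin_index g_least).
Qed.
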